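(* Assume $q>2$. Let $d\ge1$ and let $P\in A$ be a monic irreducible polynomial of degree $d$. Then $\sum_{i=0}^{d-1}l_i^{-1}$ is $P$-integral and $$\operatorname{BG}_{q^d-2}\equiv\sum_{i=0}^{d-1}\frac{1}{l_i}\pmod P.$$
   Context: $A=\mathbb{F}_q[\theta]$, $A^+(k)$ the monic polynomials of degree $k$; $\operatorname{BG}_n=\sum_{k\ge0}\sum_{a\in A^+(k)}a^{n}\in A$ (a finite sum since the inner sums vanish for large $k$). $l_0=1$, $l_i=(\theta-\theta^{q^i})l_{i-1}$ for $i\ge1$. *)

From HB Require Import structures.
From mathcomp Require Import all_boot all_order all_algebra.
From mathcomp Require Import fraction.
Set Implicit Arguments. Unset Strict Implicit. Unset Printing Implicit Defensive.
Import GRing.Theory.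
Local Open Scope ring_scope.

(* A = F[theta], theta = 'X, F a finite field with q = #|F| elements. *)

Definition monic_of (F : finFieldType) (k : nat) (c : {ffun 'I_k -> F}) : {poly F} :=
  'X^k + \sum_(i < k) (c i)%:P * 'X^i.

(* S_k(n) = sum_{a in A^+(k)} a^n ; A^+(k) is enumerated bijectively by the
   coefficient vectors c of its lower-order terms. *)
Definition Spow (F : finFieldType) (k n : nat) : {poly F} :=
  \sum_(c : {ffun 'I_k -> F}) (monic_of c) ^+ n.

Definition ell (F : finFieldType) (i : nat) : {poly F} :=
  \prod_(1 <= j < i.+1) ('X - 'X^(#|F| ^ j)).

Notation "x %:F" := (@FracField.tofrac _ x) : ring_scope.

From HB Require Import structures.
From mathcomp Require Import all_boot all_order all_algebra all_field.
From mathcomp Require Import ring.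
Set Implicit Arguments. Unset Strict Implicit. Unset Printing Implicit Defensive.
Import GRing.Theory.
Local Open Scope ring_scope.

(* Reduce modulo P.  In the residue field K = F[theta]/(P), of order q^d,
   a^(q^d-2) = a^-1, so the degree-k part of BG_(q^d-2) becomes the sum of
   1/(theta^k + v) over the F-span V_k of 1, theta, ..., theta^(k-1).  For
   k >= d, V_k = K and this is the sum of all inverses in K, which vanishes as
   #|K| > 2.  For k < d, the sum of 1/(y + v) over V_k is e_k'(y)/e_k(y) for the
   subspace polynomial e_k of V_k; at y = theta^k this is 1/l_k, because
   e_k(theta^k) is Carlitz's D_k and e_k' = D_k/l_k.  Multiplying by
   l_0 ... l_(d-1), which is prime to P, gives the congruence. *)

Lemma exprn_sum_pchar (R : comNzRingType) n (pn : [pchar R].-nat n)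
    (I : Type) (r : seq I) (P : pred I) (f : I -> R) :
  (\sum_(i <- r | P i) f i) ^+ n = \sum_(i <- r | P i) f i ^+ n.
Proof.
apply: (big_morph (fun x => x ^+ n)) => [x y|]; first exact: exprDn_pchar.
by rewrite expr0n; case: n pn.
Qed.

Lemma expf_cardX (F : finFieldType) n (x : F) : x ^+ (#|F| ^ n)%N = x.
Proof. by elim: n => [|n IH]; rewrite ?expr1 // expnSr exprM IH expf_card. Qed.

Lemma expf_card_sub2 (K : finFieldType) (x : K) : (2 < #|K|)%N -> x ^+ (#|K| - 2) = x^-1.
Proof.
move=> K_gt2; have [->|x0] := eqVneq x 0.
  by rewrite invr0 expr0n subn_eq0 leqNgt K_gt2.
apply: (mulIf x0); rewrite mulVf //; apply: (mulIf x0).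
by rewrite mul1r -mulrA -expr2 -exprD subnK ?expf_card // ltnW.
Qed.

Lemma finField_sum_eq0 (K : finFieldType) : (2 < #|K|)%N -> \sum_(x : K) x = 0.
Proof.
move=> K_gt2; have [y /andP[y0 y1]] : exists y : K, (y != 0) && (y != 1).
  apply/existsP; apply: contraTT K_gt2; rewrite negb_exists -leqNgt => /forallP yP.
  apply: leq_trans (subset_leq_card (_ : K \subset [:: 0; 1])) (card_size _).
  apply/subsetP => x _; have := yP x; rewrite negb_and !negbK.
  by case/orP => /eqP ->; rewrite !inE eqxx ?orbT.
have : \sum_(x : K) x = y * \sum_(x : K) x.
  by rewrite mulr_sumr; apply: (reindex_inj (mulfI y0)).
move/eqP; rewrite -subr_eq0 -{1}(mul1r (\sum__ _)) -mulrBl mulf_eq0 subr_eq0 eq_sym.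
by rewrite (negbTE y1) => /eqP.
Qed.

Lemma finField_sum_inv_eq0 (K : finFieldType) : (2 < #|K|)%N -> \sum_(x : K) x^-1 = 0.
Proof. by move=> K_gt2; rewrite -[RHS](finField_sum_eq0 K_gt2) [RHS](reindex_inj invr_inj). Qed.

Lemma mulr_prod_sum_inv (R : fieldType) n (x : 'I_n -> R) : (forall i, x i != 0) ->
  (\prod_(i < n) x i) * \sum_(i < n) (x i)^-1 = \sum_(i < n) \prod_(j < n | j != i) x j.
Proof.
move=> x_neq0; rewrite mulr_sumr; apply: eq_bigr => i _.
by rewrite (bigD1 i) //= mulrAC mulfV // mul1r.
Qed.

Lemma horner_deriv_prod_XsubC (R : fieldType) (s : seq R) (u : R) :
  \prod_(r <- s) (u - r) != 0 ->
  (\prod_(r <- s) ('X - r%:P))^`().[u] =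
    (\prod_(r <- s) (u - r)) * \sum_(r <- s) (u - r)^-1.
Proof.
elim: s => [|r s IH]; first by rewrite !big_nil derivC horner0 mulr0.
rewrite !big_cons mulf_eq0 negb_or => /andP[ur_neq0 /IH {}IH].
rewrite derivM hornerD !hornerM IH derivXsubC hornerC hornerXsubC horner_prod.
under eq_bigr do rewrite hornerXsubC.
by rewrite mulrDr mul1r mulrAC mulfV // mul1r mulrA.
Qed.

Definition ffun_rcons (T : Type) k (c : {ffun 'I_k -> T}) (a : T) : {ffun 'I_k.+1 -> T} :=
  [ffun i => if unlift ord_max i is Some j then c j else a].

Lemma ffun_rcons_last (T : Type) k (c : {ffun 'I_k -> T}) a : ffun_rcons c a ord_max = a.
Proof. by rewrite ffunE unlift_none. Qed.

Lemma ffun_rcons_widen (T : Type) k (c : {ffun 'I_k -> T}) a (i : 'I_k) :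
  ffun_rcons c a (widen_ord (leqnSn k) i) = c i.
Proof.
have -> : widen_ord (leqnSn k) i = lift ord_max i.
  by apply: val_inj; rewrite /= /bump leqNgt ltn_ord.
by rewrite ffunE liftK.
Qed.

Lemma big_ffun_rcons (R : nmodType) (T : finType) k (g : {ffun 'I_k.+1 -> T} -> R) :
  \sum_c g c = \sum_(a : T) \sum_(c : {ffun 'I_k -> T}) g (ffun_rcons c a).
Proof.
rewrite pair_big /= (reindex (fun p : T * {ffun 'I_k -> T} => ffun_rcons p.2 p.1)) //=.
exists (fun c => (c ord_max, [ffun j => c (lift ord_max j)])) => [[a c]|c] _ /=.
  by rewrite ffun_rcons_last; congr pair; apply/ffunP => j; rewrite !ffunE liftK.
by apply/ffunP => i; rewrite ffunE; case: unliftP => [j ->|->]; rewrite ?ffunE.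
Qed.

Section Frobenius.
Variables (F : finFieldType) (L : fieldType) (iota : {rmorphism F -> L}).
Local Notation q := #|F|.

Lemma pnat_card_pchar : [pchar L].-nat q.
Proof.
have [p p_pr pF] := finPcharP F.
have := card_pprimeChar pF => /= ->.
by rewrite pnatX pnatE // (pcharf_eq (rmorph_pchar iota pF)) inE eqxx.
Qed.

Lemma pnat_cardX_pchar n : [pchar L].-nat (q ^ n)%N.
Proof. by rewrite pnatX pnat_card_pchar. Qed.

Lemma natr_card : q%:R = 0 :> L.
Proof.
have q_gt1 : (1 < q)%N := finNzRing_gt1 F.
have pq_char : pdiv q \in [pchar L].
  by apply: pnatPpi pnat_card_pchar _; rewrite pi_pdiv.
by apply/eqP; rewrite -(dvdn_pcharf pq_char) pdiv_dvd.
Qed.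

Lemma rmorph_cardX n a : iota a ^+ (q ^ n)%N = iota a.
Proof. by rewrite -rmorphXn expf_cardX. Qed.

Lemma rmorph_card a : iota a ^+ q = iota a.
Proof. by rewrite -rmorphXn expf_card. Qed.

End Frobenius.

Section Carlitz.
Variables (F : finFieldType) (L : fieldType) (iota : {rmorphism F -> L}) (t : L).
Local Notation q := #|F|.

Let q_gt1 : (1 < q)%N. Proof. exact: finNzRing_gt1. Qed.
Let q_gt0 : (0 < q)%N. Proof. exact: ltnW. Qed.
Let q_predK : q.-1.+1 = q. Proof. exact: prednK. Qed.

Let exprD_card (x y : L) : (x + y) ^+ q = x ^+ q + y ^+ q.
Proof. exact/exprDn_pchar/(pnat_card_pchar iota). Qed.

Let exprN_card (x : L) : (- x) ^+ q = - x ^+ q.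
Proof. exact/exprNn_pchar/(pnat_card_pchar iota). Qed.

Let expr_card (x : L) : x ^+ q = x * x ^+ q.-1.
Proof. by rewrite -exprS q_predK. Qed.

(* [carlitz_e k] is the subspace polynomial prod_(v in V_k) (x - v) of the
   F-span V_k of 1, t, ..., t^(k-1): splitting V_(k+1) into the cosets of V_k
   gives e_(k+1)(x) = prod_(a in F) (e_k(x) - a e_k(t^k)), i.e. the recursion
   below.  For t = theta, [carlitz_D k] is Carlitz's D_k. *)
Fixpoint carlitz_e (k : nat) (x : L) : L :=
  if k is k'.+1 then
    carlitz_e k' x ^+ q - carlitz_e k' (t ^+ k') ^+ q.-1 * carlitz_e k' x
  else x.

Definition carlitz_D (k : nat) : L := carlitz_e k (t ^+ k).

Lemma carlitz_eS k x :
  carlitz_e k.+1 x = carlitz_e k x ^+ q - carlitz_D k ^+ q.-1 * carlitz_e k x.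
Proof. by []. Qed.

Lemma carlitz_eD k x y : carlitz_e k (x + y) = carlitz_e k x + carlitz_e k y.
Proof. by elim: k => //= k ->; rewrite exprD_card; ring. Qed.

Lemma carlitz_eZ k a x : carlitz_e k (iota a * x) = iota a * carlitz_e k x.
Proof. by elim: k => //= k ->; rewrite exprMn rmorph_card; ring. Qed.

Lemma carlitz_e_vanish k i : (i < k)%N -> carlitz_e k (t ^+ i) = 0.
Proof.
elim: k => // k IH; rewrite ltnS leq_eqVlt carlitz_eS => /orP[/eqP->|/IH->].
  by rewrite -/(carlitz_D k) expr_card; ring.
by rewrite expr0n gtn_eqF // mulr0 subr0.
Qed.

Lemma carlitz_e_qpoly k : exists alpha : nat -> L,
  alpha k = 1 /\ forall x, carlitz_e k x = \sum_(i < k.+1) alpha i * x ^+ (q ^ i).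
Proof.
elim: k => [|k [alpha [alpha_k e_k]]].
  by exists (fun=> 1); split=> // x; rewrite big_ord1 expn0 expr1 mul1r.
exists (fun i => (if i is j.+1 then alpha j ^+ q else 0) -
                 (if (i <= k)%N then carlitz_D k ^+ q.-1 * alpha i else 0)).
split=> [|x]; first by rewrite ltnn subr0 alpha_k expr1n.
rewrite carlitz_eS e_k (exprn_sum_pchar (pnat_card_pchar iota)).
under [in RHS]eq_bigr do rewrite mulrBl.
rewrite sumrB mulr_sumr; congr (_ - _).
  rewrite [in RHS]big_ord_recl /= mul0r add0r; apply: eq_bigr => i _.
  by rewrite exprMn -exprM expnSr.
rewrite [in RHS]big_ord_recr /= ltnn mul0r addr0; apply: eq_bigr => i _.
by rewrite /= -ltnS ltn_ord mulrA.
Qed.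

(* Moore determinant: evaluate the q-polynomial [carlitz_e k] against the
   monic polynomial prod_(j < k) (X - t^(q^j)) of degree k. *)
Lemma carlitz_D_prod k :
  carlitz_D k = \prod_(j < k) (t ^+ (q ^ k) - t ^+ (q ^ j)).
Proof.
have [alpha [alpha_k e_k]] := carlitz_e_qpoly k.
pose f : {poly L} := \prod_(j < k) ('X - (t ^+ (q ^ j))%:P).
have size_f : size f = k.+1.
  by rewrite size_prod_XsubC /index_enum unlock -enumT size_enum_ord.
have f_k : f`_k = 1.
  have /monicP := monic_prod_XsubC (index_enum 'I_k) xpredT (fun j => t ^+ (q ^ j)).
  by rewrite lead_coefE size_f.
have f_root (j : 'I_k) : f.[t ^+ (q ^ j)] = 0.
  by rewrite horner_prod (bigD1 j) //= hornerXsubC subrr mul0r.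
have : \sum_(j < k.+1) alpha j * f.[t ^+ (q ^ j)] = carlitz_D k.
  under eq_bigr do rewrite (horner_coef_wide _ (eq_leq size_f)) mulr_sumr.
  rewrite exchange_big /=.
  under eq_bigr => i _ do under eq_bigr do rewrite exprAC mulrCA.
  under eq_bigr do rewrite -mulr_sumr -e_k.
  by rewrite big_ord_recr /= f_k mul1r big1 ?add0r // => i _; rewrite carlitz_e_vanish ?mulr0.
rewrite big_ord_recr /= alpha_k mul1r big1 ?add0r => [<-|j _]; last by rewrite f_root mulr0.
by rewrite horner_prod; apply: eq_bigr => j _; rewrite hornerXsubC.
Qed.

Lemma carlitz_DS k : carlitz_D k.+1 = (t ^+ (q ^ k.+1) - t) * carlitz_D k ^+ q.
Proof.
rewrite !carlitz_D_prod big_ord_recl expn0 expr1 -prodrXl; congr (_ * _).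
apply: eq_bigr => j _; rewrite -[q in RHS]expn1.
by rewrite exprDn_pchar ?exprNn_pchar ?pnat_cardX_pchar // -!exprM -!expnSr.
Qed.

Definition ell_at (k : nat) : L := \prod_(1 <= j < k.+1) (t - t ^+ (q ^ j)).

(* The coefficient of x in the q-polynomial [carlitz_e k]. *)
Fixpoint carlitz_e_lin (k : nat) : L :=
  if k is k'.+1 then - carlitz_e_lin k' * carlitz_D k' ^+ q.-1 else 1.

Lemma carlitz_e_lin_ell k : carlitz_e_lin k * ell_at k = carlitz_D k.
Proof.
elim: k => [|k IH]; first by rewrite /ell_at big_geq // mulr1.
rewrite /ell_at big_nat_recr //= -/(ell_at k) carlitz_DS expr_card -IH; ring.
Qed.

Lemma sum_inv_subF (u : L) : u ^+ q - u != 0 ->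
  \sum_(a : F) (u - iota a)^-1 = - (u ^+ q - u)^-1.
Proof.
move=> uq_neq0; set s := map iota (enum F).
have prod_s : \prod_(r <- s) ('X - r%:P) = 'X^q - 'X :> {poly L}.
  have := congr1 (map_poly iota) (finField_genPoly F).
  rewrite rmorphB /= map_polyXn map_polyX rmorph_prod /= => ->.
  by rewrite big_map big_enum; apply: eq_bigr => a _; rewrite map_polyXsubC.
have prod_s_u : \prod_(r <- s) (u - r) = u ^+ q - u.
  have := congr1 (horner^~ u) prod_s; rewrite horner_prod !hornerE => <-.
  by apply: eq_bigr => r _; rewrite hornerXsubC.
have := @horner_deriv_prod_XsubC _ s u; rewrite prod_s prod_s_u => /(_ uq_neq0).
rewrite derivB derivXn derivX -mulr_natr -(rmorph_nat (@polyC L)) (natr_card iota).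
rewrite mulr0 sub0r hornerN hornerC big_map big_enum /= => sum_s.
by apply: (mulfI uq_neq0); rewrite -sum_s mulrN mulfV.
Qed.

Lemma sum_inv_addFZ (y w : L) : y ^+ q - w ^+ q.-1 * y != 0 ->
  \sum_(a : F) (y + iota a * w)^-1 = - w ^+ q.-1 / (y ^+ q - w ^+ q.-1 * y).
Proof.
have [->|w_neq0] := eqVneq w 0.
  have q1_gt0 : (0 < q.-1)%N by rewrite -ltnS q_predK.
  rewrite expr0n gtn_eqF // mul0r oppr0 mul0r => _.
  under eq_bigr do rewrite mulr0 addr0.
  by rewrite sumr_const -mulr_natr (natr_card iota) mulr0.
move=> nz; set u := - (y / w).
have wq_neq0 : w ^+ q.-1 != 0 by rewrite expf_neq0.
have uq : u ^+ q - u = - (y ^+ q - w ^+ q.-1 * y) / (w * w ^+ q.-1).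
  by rewrite /u exprN_card expr_div_n (expr_card w); field; rewrite w_neq0 wq_neq0.
have uq_neq0 : u ^+ q - u != 0.
  by rewrite uq mulf_neq0 ?oppr_eq0 ?invr_eq0 ?mulf_neq0.
have yaw a : y + iota a * w = - w * (u - iota a) by rewrite /u; field.
under eq_bigr do rewrite yaw invfM.
by rewrite -mulr_sumr sum_inv_subF // uq; field; rewrite !oppr_eq0 nz w_neq0 wq_neq0.
Qed.

Definition lincomb k (c : {ffun 'I_k -> F}) : L := \sum_(i < k) iota (c i) * t ^+ i.

Lemma lincomb_rcons k (c : {ffun 'I_k -> F}) a :
  lincomb (ffun_rcons c a) = lincomb c + iota a * t ^+ k.
Proof.
rewrite /lincomb big_ord_recr /= ffun_rcons_last; congr (_ + _).
by apply: eq_bigr => i _; rewrite ffun_rcons_widen.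
Qed.

(* This is e_k'(y)/e_k(y), the derivative of the F-linear e_k being the
   constant [carlitz_e_lin k]. *)
Lemma sum_inv_lincomb k y : carlitz_e k y != 0 ->
  \sum_(c : {ffun 'I_k -> F}) (y + lincomb c)^-1 = carlitz_e_lin k / carlitz_e k y.
Proof.
elim: k y => [|k IH] y ey_neq0.
  under eq_bigr do rewrite /lincomb big_ord0 addr0.
  by rewrite sumr_const card_ffun card_ord expn0 mul1r.
have eya_neq0 a : carlitz_e k (y + iota a * t ^+ k) != 0.
  rewrite carlitz_eD carlitz_eZ -/(carlitz_D k); apply: contraNneq ey_neq0 => eya0.
  rewrite carlitz_eS.
  have -> : carlitz_e k y = - (iota a * carlitz_D k) by apply/eqP; rewrite -addr_eq0 eya0.
  rewrite exprN_card exprMn rmorph_card expr_card; apply/eqP; ring.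
rewrite big_ffun_rcons.
rewrite (eq_bigr (fun a => carlitz_e_lin k / carlitz_e k (y + iota a * t ^+ k))); last first.
  move=> a _; rewrite -IH //; apply: eq_bigr => c _.
  by rewrite lincomb_rcons addrA addrAC.
under eq_bigr do rewrite carlitz_eD carlitz_eZ -/(carlitz_D k).
by rewrite -mulr_sumr sum_inv_addFZ // -carlitz_eS mulrA mulrN -mulNr.
Qed.

End Carlitz.

Section ResidueField.
Variables (F : finFieldType) (P : {poly F}) (P_mi : monic_irreducible_poly P).
Variables (d : nat) (size_P : size P = d.+1).
Local Notation q := #|F|.
Local Notation K := {poly %/ P with P_mi}.

Definition residue : {rmorphism {poly F} -> K} := in_qpoly P.

Definition residueC : F -> K := residue \o polyC.
Definition theta : K := residue 'X.

Let q_gt1 : (1 < q)%N. Proof. exact: finNzRing_gt1. Qed.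

Lemma residue_eq0 p : (residue p == 0) = (P %| p).
Proof. by rewrite -val_eqE /= (mk_monicE P_mi) dvdpE. Qed.

Lemma card_residue : #|K| = (q ^ d)%N.
Proof. by rewrite card_qfpoly size_P. Qed.

Lemma residue_lincomb k (c : {ffun 'I_k -> F}) :
  residue (\sum_(i < k) (c i)%:P * 'X^i) = lincomb residueC theta c.
Proof. by rewrite rmorph_sum; apply: eq_bigr => i _; rewrite rmorphM rmorphXn. Qed.

Lemma residue_monic_of k (c : {ffun 'I_k -> F}) :
  residue (monic_of c) = theta ^+ k + lincomb residueC theta c.
Proof. by rewrite /monic_of rmorphD rmorphXn residue_lincomb. Qed.

Lemma residue_ell i : residue (ell F i) = ell_at F theta i.
Proof. by rewrite rmorph_prod; apply: eq_bigr => j _; rewrite rmorphB !rmorphXn. Qed.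

Lemma lincomb_residue_bij : bijective (@lincomb F K residueC theta d).
Proof.
pose poly_of (c : {ffun 'I_d -> F}) := \sum_(i < d) (c i)%:P * 'X^i.
have size_poly_of c : (size (poly_of c) <= d)%N.
  apply: (leq_trans (size_sum _ _ _)); apply/bigmax_leqP => i _.
  by rewrite mul_polyC (leq_trans (size_scale_leq _ _)) // size_polyXn.
have coef_poly_of c (j : 'I_d) : (poly_of c)`_j = c j.
  rewrite coef_sum (bigD1 j) //= coefCM coefXn eqxx mulr1 big1 ?addr0 // => i ij.
  by rewrite coefCM coefXn eq_sym -[_ == _]/(i == j) (negbTE ij) mulr0.
apply: inj_card_bij; last by rewrite card_residue card_ffun card_ord.
move=> c1 c2 eq_c12; have : P %| poly_of c1 - poly_of c2.
  by rewrite -residue_eq0 rmorphB /poly_of !residue_lincomb eq_c12 subrr.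
have [eq_p12 _|neq_p12] := eqVneq (poly_of c1 - poly_of c2) 0.
  by apply/ffunP => j; rewrite -!coef_poly_of; move/eqP: eq_p12; rewrite subr_eq0 => /eqP->.
move/(dvdp_leq neq_p12); rewrite size_P ltnNge => /negP[].
by apply: leq_trans (size_polyD _ _) _; rewrite size_polyN geq_max !size_poly_of.
Qed.

Lemma residue_frob_fixed j : theta ^+ (q ^ j) = theta -> forall x : K, x ^+ (q ^ j) = x.
Proof.
move=> theta_fixed x; have [g _ gK] := lincomb_residue_bij; rewrite -[x]gK /lincomb.
rewrite (exprn_sum_pchar (pnat_cardX_pchar residueC j)); apply: eq_bigr => i _.
by rewrite exprMn rmorph_cardX exprAC theta_fixed.
Qed.

Lemma theta_frob_neq j : (0 < j < d)%N -> theta ^+ (q ^ j) != theta.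
Proof.
case/andP=> j_gt0 jd; apply/negP => /eqP/residue_frob_fixed fixed.
have qj_gt1 : (1 < q ^ j)%N by rewrite -{1}(expn0 q) ltn_exp2l.
pose r : {poly K} := 'X^(q ^ j) - 'X.
have size_r : size r = (q ^ j).+1.
  by rewrite size_polyDl ?size_polyXn // size_polyN size_polyX ltnS.
have r_neq0 : r != 0 by rewrite -size_poly_eq0 size_r.
have all_roots : all (root r) (enum K).
  by apply/allP => x _; rewrite /root !hornerE fixed subrr.
have := max_poly_roots r_neq0 all_roots (enum_uniq K).
by rewrite -cardE card_residue size_r ltnS leqNgt ltn_exp2l // jd.
Qed.

Lemma ell_at_neq0 k : (k < d)%N -> ell_at F theta k != 0.
Proof.
move=> kd; rewrite prodf_seq_neq0; apply/allP => j; rewrite mem_index_iota => /andP[j_gt0 jk].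
by rewrite subr_eq0 eq_sym theta_frob_neq // j_gt0 (leq_ltn_trans _ kd).
Qed.

Lemma carlitz_D_neq0 k : (k < d)%N -> carlitz_D F theta k != 0.
Proof.
elim: k => [|k IH kd]; first by rewrite /carlitz_D /= expr0 oner_neq0.
rewrite (carlitz_DS residueC) mulf_neq0 ?expf_neq0 ?IH ?(ltnW kd) //.
by rewrite subr_eq0 theta_frob_neq.
Qed.

Hypotheses (q_gt2 : (2 < q)%N) (d_gt0 : (0 < d)%N).

Let card_residue_gt2 : (2 < #|K|)%N.
Proof.
by rewrite card_residue (leq_trans q_gt2) // -{1}(expn1 q) leq_pexp2l // ltnW.
Qed.

Lemma residue_Spow k : residue (Spow F k (q ^ d - 2)) =
  \sum_(c : {ffun 'I_k -> F}) (theta ^+ k + lincomb residueC theta c)^-1.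
Proof.
rewrite rmorph_sum; apply: eq_bigr => c _.
by rewrite rmorphXn residue_monic_of -card_residue expf_card_sub2.
Qed.

Lemma residue_Spow_small k : (k < d)%N ->
  residue (Spow F k (q ^ d - 2)) = (residue (ell F k))^-1.
Proof.
move=> kd; have D_neq0 := carlitz_D_neq0 kd.
rewrite residue_Spow (sum_inv_lincomb residueC) // residue_ell.
rewrite -/(carlitz_D F theta k) -(carlitz_e_lin_ell residueC) invfM mulrA mulfV ?mul1r //.
by apply: contraNneq D_neq0; rewrite -(carlitz_e_lin_ell residueC) => ->; rewrite mul0r.
Qed.

(* Already the first d coordinates of c sweep out all of K. *)
Lemma sum_inv_lincomb_large m (h : K) :
  \sum_(c : {ffun 'I_(d + m) -> F}) (h + lincomb residueC theta c)^-1 = 0.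
Proof.
elim: m h => [|m IH] h.
  rewrite addn0 -[RHS](finField_sum_inv_eq0 card_residue_gt2) [RHS](reindex_inj (addrI h)).
  by rewrite [RHS](reindex _ (onW_bij _ lincomb_residue_bij)).
rewrite addnS big_ffun_rcons big1 // => a _.
rewrite -[RHS](IH (h + residueC a * theta ^+ (d + m))); apply: eq_bigr => c _.
by rewrite lincomb_rcons addrA addrAC.
Qed.

Lemma residue_Spow_large k : (d <= k)%N -> residue (Spow F k (q ^ d - 2)) = 0.
Proof. by move=> dk; rewrite residue_Spow -(subnKC dk) sum_inv_lincomb_large. Qed.

Lemma residue_sum_Spow N : (forall k, (N <= k)%N -> Spow F k (q ^ d - 2) = 0) ->
  residue (\sum_(k < N) Spow F k (q ^ d - 2)) = \sum_(i < d) (residue (ell F i))^-1.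
Proof.
move=> Spow_eq0; rewrite -(big_mkord xpredT (fun k => Spow F k (q ^ d - 2))).
have -> : \sum_(0 <= k < N) Spow F k (q ^ d - 2) = \sum_(0 <= k < N + d) Spow F k (q ^ d - 2).
  rewrite (big_cat_nat _ (leq_addr d N)) //= [X in _ + X]big1_seq ?addr0 // => k.
  by rewrite mem_index_iota => /andP[_ /andP[/Spow_eq0]].
rewrite (big_cat_nat _ (leq_addl N d)) //= rmorphD !rmorph_sum big_mkord.
rewrite [X in _ + X]big1_seq ?addr0 => [|k].
  by apply: eq_bigr => i _; apply: residue_Spow_small.
by rewrite mem_index_iota => /andP[_ /andP[/residue_Spow_large]].
Qed.

End ResidueField.

Theorem corollary5p2 (F : finFieldType) (d : nat) (P : {poly F}) (N : nat) :
  (2 < #|F|)%N -> (1 <= d)%N ->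
  P \is monic -> irreducible_poly P -> size P = d.+1 ->
  (forall k, (N <= k)%N -> Spow F k (#|F| ^ d - 2) = 0) ->
  exists a b : {poly F},
    [/\ ~~ (P %| b),
        b%:F * (\sum_(i < d) ((ell F i)%:F)^-1) = a%:F
      & P %| b * (\sum_(k < N) Spow F k (#|F| ^ d - 2)) - a].
Proof.
move=> q_gt2 d_gt0 P_monic P_irr size_P Spow_eq0.
have P_mi : monic_irreducible_poly P := (P_irr, P_monic).
have res_ell_neq0 (i : 'I_d) : residue P_mi (ell F i) != 0.
  by rewrite residue_ell (ell_at_neq0 _ size_P).
have ell_neq0 (i : 'I_d) : ell F i != 0.
  by apply: contraNneq (res_ell_neq0 i) => ->; rewrite rmorph0.
exists (\sum_(i < d) \prod_(j < d | j != i) ell F j), (\prod_(i < d) ell F i); split.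
- by rewrite -(residue_eq0 P_mi) rmorph_prod; apply/prodf_neq0.
- rewrite rmorph_prod rmorph_sum mulr_prod_sum_inv => [|i]; last by rewrite tofrac_eq0.
  by apply: eq_bigr => i _; rewrite rmorph_prod.
rewrite -(residue_eq0 P_mi) rmorphB rmorphM (residue_sum_Spow _ size_P) //.
rewrite rmorph_prod mulr_prod_sum_inv // rmorph_sum subr_eq0.
by apply/eqP/eq_bigr => i _; rewrite rmorph_prod.
Qed.
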